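(* Let $\mathcal L\in\{\mathrm{FO},\mathrm{FOE}\}$, $B\subseteq A$, and let $\varphi$ be an $\mathcal L(A)$-sentence. Then $\varphi$ is continuous in $B$ if and only if $\varphi$ is equivalent to some sentence of $\mathcal L(A)$ that is syntactically continuous in $B$.
   Context: Fix a finite set $A$ of unary predicate symbols. A monadic model is a pair $(D,V)$ with $D$ a set (possibly empty) and $V:A\to\wp(D)$. $\mathrm{FOE}(A)$ is monadic first-order logic with equality over $A$ in negation normal form ($\top,\bot,a(x),\neg a(x),x\approx y,x\not\approx y$, $\wedge,\vee,\exists,\forall$); $\mathrm{FO}(A)$ is its fragment without $\approx,\not\approx$. On the empty model $\exists x.\varphi$ is false and $\forall x.\varphi$ true. $V\le_BV'$ means $V(b)\subseteq V'(b)$ for $b\in B$ and $V(a)=V'(a)$ for $a\notin B$; $\varphi$ is monotone in $B$ if $(D,V),g\models\varphi$ and $V\le_BV'$ imply $(D,V'),g\models\varphi$. Write $U\le^\omega_BV$ if $U\le_BV$ and $U(b)$ is finite for all $b\in B$. $\varphi$ is continuous in $B$ if it is monotone in $B$ and whenever $(D,V),g\models\varphi$ there is $U\le^\omega_BV$ with $(D,U),g\models\varphi$. The formulas of $\mathcal L(A)$ syntactically continuous in $B$ are generated by $\varphi::=\psi\mid b(x)\mid\varphi\wedge\varphi\mid\varphi\vee\varphi\mid\exists x.\varphi$ with $b\in B$ and $\psi\in\mathcal L(A\setminus B)$ (no symbol of $B$ occurs in $\psi$). *)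

From Stdlib Require List.
From mathcomp Require Import all_boot.
Set Implicit Arguments. Unset Strict Implicit. Unset Printing Implicit Defensive.

Definition var := nat.

(* Monadic first-order formulas with equality over A, in negation normal form. *)
Inductive form (A : Type) : Type :=
| FTop | FBot
| FAt  of A & var
| FNAt of A & var
| FEq  of var & var
| FNEq of var & var
| FAnd of form A & form A
| FOr  of form A & form A
| FEx  of var & form A
| FAll of var & form A.
Arguments FTop {A}. Arguments FBot {A}.

Fixpoint eq_free (A : Type) (f : form A) : Prop :=
  match f with
  | FEq _ _ | FNEq _ _ => False
  | FAnd f1 f2 | FOr f1 f2 => eq_free f1 /\ eq_free f2
  | FEx _ f1 | FAll _ f1 => eq_free f1
  | _ => True
  end.

Inductive logic := FO | FOE.
Definition in_logic (L : logic) (A : Type) (f : form A) : Prop :=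
  match L with FO => eq_free f | FOE => True end.

Fixpoint free_in (A : Type) (x : var) (f : form A) : Prop :=
  match f with
  | FTop | FBot => False
  | FAt _ y | FNAt _ y => x = y
  | FEq y z | FNEq y z => x = y \/ x = z
  | FAnd f1 f2 | FOr f1 f2 => free_in x f1 \/ free_in x f2
  | FEx y f1 | FAll y f1 => x <> y /\ free_in x f1
  end.
Definition sentence (A : Type) (f : form A) : Prop := forall x, ~ free_in x f.

Fixpoint avoids (A : finType) (B : {set A}) (f : form A) : Prop :=
  match f with
  | FAt a _ | FNAt a _ => a \notin B
  | FAnd f1 f2 | FOr f1 f2 => avoids B f1 /\ avoids B f2
  | FEx _ f1 | FAll _ f1 => avoids B f1
  | _ => True
  end.

(* A monadic model is a (possibly empty) type D with a valuation
   V : A -> (D -> Prop) (subsets of D as predicates).  Since D may be empty,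
   assignments are partial: g : var -> option D (unassigned variables make
   atoms false; this is irrelevant for sentences, which are evaluated under
   the empty assignment). *)
Definition assign (D : Type) := var -> option D.
Definition upd (D : Type) (g : assign D) (x : var) (d : D) : assign D :=
  fun y => if y == x then Some d else g y.

Fixpoint sat (A D : Type) (V : A -> D -> Prop) (g : assign D) (f : form A) : Prop :=
  match f with
  | FTop => True
  | FBot => False
  | FAt a x => exists d, g x = Some d /\ V a d
  | FNAt a x => exists d, g x = Some d /\ ~ V a d
  | FEq x y => exists d, g x = Some d /\ g y = Some d
  | FNEq x y => exists d e, g x = Some d /\ g y = Some e /\ d <> e
  | FAnd f1 f2 => sat V g f1 /\ sat V g f2
  | FOr f1 f2 => sat V g f1 \/ sat V g f2
  | FEx x f1 => exists d : D, sat V (upd g x d) f1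
  | FAll x f1 => forall d : D, sat V (upd g x d) f1
  end.

Definition holds (A D : Type) (V : A -> D -> Prop) (f : form A) : Prop :=
  sat V (fun _ => None) f.

Definition leB (A : finType) (B : {set A}) (D : Type) (V V' : A -> D -> Prop) : Prop :=
  forall a : A,
    (a \in B -> forall d, V a d -> V' a d) /\
    (a \notin B -> forall d, V a d <-> V' a d).

Definition leB_fin (A : finType) (B : {set A}) (D : Type) (U V : A -> D -> Prop) : Prop :=
  leB B U V /\ forall b, b \in B -> exists l : seq D, forall d, U b d -> List.In d l.

Definition monotone_in (A : finType) (B : {set A}) (f : form A) : Prop :=
  forall (D : Type) (V V' : A -> D -> Prop) (g : assign D),
    sat V g f -> leB B V V' -> sat V' g f.

Definition continuous_in (A : finType) (B : {set A}) (f : form A) : Prop :=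
  monotone_in B f /\
  forall (D : Type) (V : A -> D -> Prop) (g : assign D),
    sat V g f -> exists U : A -> D -> Prop, leB_fin B U V /\ sat U g f.

Inductive syn_cont (L : logic) (A : finType) (B : {set A}) : form A -> Prop :=
| SC_base f : in_logic L f -> avoids B f -> syn_cont L B f
| SC_at b x : b \in B -> syn_cont L B (FAt b x)
| SC_and f1 f2 : syn_cont L B f1 -> syn_cont L B f2 -> syn_cont L B (FAnd f1 f2)
| SC_or f1 f2 : syn_cont L B f1 -> syn_cont L B f2 -> syn_cont L B (FOr f1 f2)
| SC_ex x f : syn_cont L B f -> syn_cont L B (FEx x f).

Definition equiv_sent (A : Type) (f1 f2 : form A) : Prop :=
  forall (D : Type) (V : A -> D -> Prop), holds V f1 <-> holds V f2.

(* Syntactically continuous formulas are continuous by induction on the syntax.  Conversely, let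
   phi be continuous in B.  Continuity gives, in every model of phi, some U <=_B V with finitely
   many B-atoms still satisfying phi; the point is to capture such witnesses by finitely many
   syntactically continuous sentences.

   For FO, a sentence does not distinguish a model from its product with nat, and there a finite
   B-part leaves every colour c of V realised by some copy of colour c \ B.  The sentence
   chiFO R E, saying that the colours in R are realised up to extra B-atoms and that the B-free
   parts of colours are exactly those in E, is syntactically continuous; for R, E the colours
   realised by U it holds in V, and every model V' of it carries, on its product with nat, a
   valuation W <=_B V' bisimilar to U, so it entails phi by monotonicity.

   For FOE, a sentence of quantifier rank q only sees the size of each colour class up to q
   (an Ehrenfeucht-Fraisse argument).  Inflating the large classes of V before applying
   continuity, and then trimming the witness cell by cell, yields W <=_B V satisfying phi whose
   B-atoms live on at most N(q) elements.  So phi is equivalent to the disjunction, over lists of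
   colours c_1 ... c_k with k <= N(q), of
     exists x_1 ... x_k, /\_i (c_i :&: B)(x_i) /\ phi[b(y) := \/_{i, b \in c_i} y = x_i]. *)

From mathcomp Require Import all_boot boolp.
From Stdlib Require List.
Set Implicit Arguments. Unset Strict Implicit. Unset Printing Implicit Defensive.

Lemma In_mem (T : eqType) (x : T) (s : seq T) : List.In x s <-> x \in s.
Proof.
elim: s => [|y s IH] //=; rewrite in_cons IH.
by split=> [[->|->]|/orP [/eqP ->|->]]; rewrite ?eqxx ?orbT; [| |left|right].
Qed.

Lemma nth_error_lt (T : Type) (l : list T) n x : List.nth_error l n = Some x -> n < size l.
Proof. by move=> e; apply/ltP/List.nth_error_Some; rewrite e. Qed.

Lemma nth_error_NoDup (T : Type) (l : list T) i j x :
  List.NoDup l -> List.nth_error l i = Some x -> List.nth_error l j = Some x -> i = j.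
Proof.
move=> /List.NoDup_nth_error H e1 e2; apply: H; first exact/ltP/(nth_error_lt e1).
by rewrite e1 e2.
Qed.

Lemma nth_error_exists (T : Type) (l : list T) n : n < size l -> exists x, List.nth_error l n = Some x.
Proof.
move=> h; case e: (List.nth_error l n) => [x|]; first by exists x.
by move/List.nth_error_None/leP: e; rewrite leqNgt h.
Qed.

Lemma In_filter (T : eqType) (P : pred T) (s : seq T) x :
  List.In x [seq y <- s | P y] <-> List.In x s /\ P x.
Proof. by rewrite !In_mem mem_filter andbC; split=> [/andP|/andP]. Qed.

Section Semantics.
Variable A : Type.

Lemma sat_ext (D : Type) (V V' : A -> D -> Prop) (f : form A) :
  (forall a d, V a d <-> V' a d) -> forall g, sat V g f <-> sat V' g f.
Proof.
move=> H; elim: f => //=.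
- move=> a x g; split=> -[d [h1 h2]]; exists d; split=> //; exact/H.
- move=> a x g; split=> -[d [h1 h2]]; exists d; split=> // hv; apply: h2; exact/H.
- by move=> f1 IH1 f2 IH2 g; rewrite IH1 IH2.
- by move=> f1 IH1 f2 IH2 g; rewrite IH1 IH2.
- move=> x f IH g; split=> -[d h]; exists d; exact/IH.
- move=> x f IH g; split=> h d; exact/IH.
Qed.

Lemma sat_agree (D : Type) (V : A -> D -> Prop) (f : form A) g1 g2 :
  (forall x, free_in x f -> g1 x = g2 x) -> (sat V g1 f <-> sat V g2 f).
Proof.
elim: f g1 g2 => //=.
- by move=> a x g1 g2 H; rewrite H.
- by move=> a x g1 g2 H; rewrite H.
- by move=> x y g1 g2 H; rewrite H ?(H y); tauto.
- by move=> x y g1 g2 H; rewrite H ?(H y); tauto.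
- move=> f1 IH1 f2 IH2 g1 g2 H.
  by rewrite (IH1 g1 g2) ?(IH2 g1 g2) // => x hx; apply: H; tauto.
- move=> f1 IH1 f2 IH2 g1 g2 H.
  by rewrite (IH1 g1 g2) ?(IH2 g1 g2) // => x hx; apply: H; tauto.
- move=> x f IH g1 g2 H.
  have E d : sat V (upd g1 x d) f <-> sat V (upd g2 x d) f.
    by apply: IH => y hy; rewrite /upd; case: eqP => // ne; apply: H.
  by split=> -[d h]; exists d; apply/E.
- move=> x f IH g1 g2 H.
  have E d : sat V (upd g1 x d) f <-> sat V (upd g2 x d) f.
    by apply: IH => y hy; rewrite /upd; case: eqP => // ne; apply: H.
  by split=> h d; apply/E.
Qed.

Lemma sentence_sat (D : Type) (V : A -> D -> Prop) (f : form A) g :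
  sentence f -> (sat V g f <-> holds V f).
Proof. by move=> Hs; apply: sat_agree => x /Hs. Qed.

Lemma upd_same (D : Type) (g : assign D) x d : upd g x d x = Some d.
Proof. by rewrite /upd eqxx. Qed.

Definition bigOr (T : Type) (s : seq T) (F : T -> form A) : form A :=
  foldr (fun x f => FOr (F x) f) FBot s.
Definition bigAnd (T : Type) (s : seq T) (F : T -> form A) : form A :=
  foldr (fun x f => FAnd (F x) f) FTop s.

Variables (T : Type) (s : seq T) (F : T -> form A).

Lemma sat_bigOr (D : Type) (V : A -> D -> Prop) g :
  sat V g (bigOr s F) <-> exists2 x, List.In x s & sat V g (F x).
Proof.
elim: s => [|x s' IH] /=; first by split=> // -[].
rewrite IH; split=> [[h|[y h1 h2]]|[y [<-|h1] h2]].
- by exists x; [left|].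
- by exists y; [right|].
- by left.
- by right; exists y.
Qed.

Lemma sat_bigAnd (D : Type) (V : A -> D -> Prop) g :
  sat V g (bigAnd s F) <-> forall x, List.In x s -> sat V g (F x).
Proof.
elim: s => [|x s' IH] //=; rewrite IH.
split=> [[h1 h2] y [<-|h]|h] //; first exact: h2.
by split=> [|y hy]; apply: h; [left | right].
Qed.

Lemma free_bigOr y : free_in y (bigOr s F) -> exists2 x, List.In x s & free_in y (F x).
Proof.
elim: s => [|x s' IH] //= [h|/IH [z hz h]]; first by exists x; [left|].
by exists z; [right|].
Qed.

Lemma free_bigAnd y : free_in y (bigAnd s F) -> exists2 x, List.In x s & free_in y (F x).
Proof.
elim: s => [|x s' IH] //= [h|/IH [z hz h]]; first by exists x; [left|].
by exists z; [right|].
Qed.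

Lemma eq_free_bigOr : (forall x, List.In x s -> eq_free (F x)) -> eq_free (bigOr s F).
Proof.
by elim: s => [|x s' IH] //= H; split; [apply: H; left | apply: IH => y hy; apply: H; right].
Qed.

Lemma eq_free_bigAnd : (forall x, List.In x s -> eq_free (F x)) -> eq_free (bigAnd s F).
Proof.
by elim: s => [|x s' IH] //= H; split; [apply: H; left | apply: IH => y hy; apply: H; right].
Qed.

End Semantics.

(** * Syntactic continuity implies continuity *)

Section SyntacticContinuity.
Variables (A : finType) (B : {set A}).

Section BigConnectives.
Variables (T : Type) (s : seq T) (F : T -> form A).
Hypothesis sF : forall x, List.In x s -> avoids B (F x).

Lemma avoids_bigOr : avoids B (bigOr s F).
Proof.
by elim: s sF => [|x s' IH] //= H; split; [apply: H; left | apply: IH => y hy; apply: H; right].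
Qed.

Lemma avoids_bigAnd : avoids B (bigAnd s F).
Proof.
by elim: s sF => [|x s' IH] //= H; split; [apply: H; left | apply: IH => y hy; apply: H; right].
Qed.
End BigConnectives.

Lemma syn_cont_bigOr L (T : Type) (s : seq T) (F : T -> form A) :
  (forall x, List.In x s -> syn_cont L B (F x)) -> syn_cont L B (bigOr s F).
Proof.
elim: s => [|x s IH] /= H; first by apply: SC_base => //; case: (L).
by apply: SC_or; [apply: H; left | apply: IH => y hy; apply: H; right].
Qed.

Lemma syn_cont_bigAnd L (T : Type) (s : seq T) (F : T -> form A) :
  (forall x, List.In x s -> syn_cont L B (F x)) -> syn_cont L B (bigAnd s F).
Proof.
elim: s => [|x s IH] /= H; first by apply: SC_base => //; case: (L).
by apply: SC_and; [apply: H; left | apply: IH => y hy; apply: H; right].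
Qed.

Lemma sat_avoids (D : Type) (V V' : A -> D -> Prop) f g :
  avoids B f -> (forall a, a \notin B -> forall d, V a d <-> V' a d) ->
  (sat V g f <-> sat V' g f).
Proof.
move=> + H; elim: f g => //=.
- move=> a x g ha; split=> -[d [h1 h2]]; exists d; split=> //; exact/(H a ha).
- move=> a x g ha; split=> -[d [h1 h2]]; exists d; split=> // hv; apply: h2; exact/(H a ha).
- by move=> f1 IH1 f2 IH2 g [h1 h2]; rewrite IH1 // IH2.
- by move=> f1 IH1 f2 IH2 g [h1 h2]; rewrite IH1 // IH2.
- by move=> x f IH g h; split=> -[d h']; exists d; apply/IH.
- by move=> x f IH g h; split=> h' d; apply/IH.
Qed.

Lemma syn_cont_monotone L f : syn_cont L B f -> monotone_in B f.
Proof.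
elim=> {f} [f _ Ha|b x hb|f1 f2 _ IH1 _ IH2|f1 f2 _ IH1 _ IH2|x f _ IH] D V V' g /=.
- by move=> h HB; apply: (sat_avoids g Ha (fun a ha => proj2 (HB a) ha)).1.
- by move=> [d [h1 h2]] HB; exists d; split=> //; apply: (proj1 (HB b) hb).
- by move=> [h1 h2] HB; split; [apply: IH1 h1 HB | apply: IH2 h2 HB].
- by move=> [h1|h2] HB; [left; apply: IH1 h1 HB | right; apply: IH2 h2 HB].
- by move=> [d h] HB; exists d; apply: IH h HB.
Qed.

Section FiniteJoin.
Variables (D : Type) (U1 U2 V : A -> D -> Prop).
Hypotheses (hU1 : leB_fin B U1 V) (hU2 : leB_fin B U2 V).

Let U12 a d := U1 a d \/ U2 a d.

Lemma leB_fin_join : leB_fin B U12 V.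
Proof.
case: hU1 hU2 => [l1 f1] [l2 f2]; split=> [a|b hb].
- case: (l1 a) (l2 a) => [hi1 ho1] [hi2 ho2]; split=> [ha d [h|h]|ha d].
  + exact: hi1.
  + exact: hi2.
  + by rewrite /U12 ho1 // ho2 //; tauto.
- case: (f1 b hb) (f2 b hb) => [s1 hs1] [s2 hs2]; exists (s1 ++ s2) => d [h|h].
  + by apply/List.in_or_app; left; apply: hs1.
  + by apply/List.in_or_app; right; apply: hs2.
Qed.

Lemma leB_join_l : leB B U1 U12.
Proof.
move=> a; split=> [_ d h|ha d]; first by left.
by split=> [|[//|h]]; [left | apply/(proj2 (hU1.1 a) ha)/(proj2 (hU2.1 a) ha)].
Qed.

Lemma leB_join_r : leB B U2 U12.
Proof.
move=> a; split=> [_ d h|ha d]; first by right.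
by split=> [|[h|//]]; [right | apply/(proj2 (hU2.1 a) ha)/(proj2 (hU1.1 a) ha)].
Qed.

End FiniteJoin.

Lemma syn_cont_continuous L f : syn_cont L B f -> continuous_in B f.
Proof.
move=> hf; split; first exact: syn_cont_monotone hf.
elim: hf => {f} [f _ Ha|b x hb|f1 f2 h1 IH1 h2 IH2|f1 f2 _ IH1 _ IH2|x f _ IH] D V g /=.
- move=> h; exists (fun a d => a \notin B /\ V a d); split.
  + split=> [a|b hb]; last by exists [::] => d []; rewrite hb.
    by split=> ha d; [case; rewrite ha | tauto].
  + by apply: (sat_avoids g Ha _).1 h => a ha d; tauto.
- move=> [d [h1 h2]].
  exists (fun a e => if a \in B then a = b /\ e = d else V a e); split.
  + split=> [a|b' hb']; last by exists [:: d] => e; rewrite hb' => -[_ ->]; left.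
    split=> ha e; rewrite ?ha ?(negbTE ha) //; by case=> -> ->.
  + by exists d; rewrite hb.
- move=> [/IH1 [U1 [hU1 s1]] /IH2 [U2 [hU2 s2]]].
  exists (fun a e => U1 a e \/ U2 a e); split; first exact: leB_fin_join.
  split; [apply: syn_cont_monotone h1 _ _ _ _ s1 _ | apply: syn_cont_monotone h2 _ _ _ _ s2 _].
  + exact: leB_join_l hU1 hU2.
  + exact: leB_join_r hU1 hU2.
- by case=> [/IH1|/IH2] [U [hU s]]; exists U; split=> //; [left | right].
- by move=> [d /IH [U [hU s]]]; exists U; split=> //; exists d.
Qed.

End SyntacticContinuity.

(** * Counting and Ehrenfeucht-Fraisse games *)

Fixpoint atleast (D : Type) (n : nat) (P : D -> Prop) : Prop :=
  if n is n'.+1 then exists d, P d /\ atleast n' (fun x => P x /\ x <> d) else True.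

Section Atleast.
Variable D : Type.
Implicit Types (P Q : D -> Prop) (n : nat).

Lemma sub_atleast n P Q : (forall x, P x -> Q x) -> atleast n P -> atleast n Q.
Proof.
elim: n P Q => [//|n IH] P Q H /= [d [hd h]]; exists d; split; first exact: H.
by apply: IH h => x [h1 h2]; split=> //; apply: H.
Qed.

Lemma atleastS_rem n P d : atleast n.+1 P -> atleast n (fun x => P x /\ x <> d).
Proof.
elim: n P => [//|n IH] P /= [d0 [h0 h]].
case: (pselect (d0 = d)) => [<-|ne]; first exact: h.
exists d0; split=> //; apply: sub_atleast (IH _ h) => x; tauto.
Qed.

Lemma atleast_leq m n P : m <= n -> atleast n P -> atleast m P.
Proof.
have atleastS k Q : atleast k.+1 Q -> atleast k Q.
  by move=> h; case: (h) => d _; apply: sub_atleast (atleastS_rem d h) => x [].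
by move=> /subnK <-; elim: (n - m) => [//|k IH] /atleastS; apply: IH.
Qed.

Lemma atleast_exists n P : 0 < n -> atleast n P -> exists d, P d.
Proof. by case: n => // n _ [d [h _]]; exists d. Qed.

Lemma atleast_seq (T : eqType) (s : seq T) (f : T -> D) P :
  uniq s -> injective f -> (forall t, t \in s -> P (f t)) -> atleast (size s) P.
Proof.
move=> + finj; elim: s P => [//|t s IH] P /= /andP [ht hs] H; exists (f t); split.
  by apply: H; rewrite mem_head.
apply: IH => // t' ht'; split; first by apply: H; rewrite in_cons ht' orbT.
by move/finj => e; move: ht; rewrite -e ht'.
Qed.

Lemma atleast_map (D' : Type) n P (Q : D' -> Prop) (f : D -> D') :
  injective f -> (forall x, P x -> Q (f x)) -> atleast n P -> atleast n Q.
Proof.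
move=> hi; elim: n P Q => [//|n IH] P Q H /= [d [hd h]]; exists (f d); split; first exact: H.
by apply: IH h => x [h1 h2]; split; [apply: H | move/hi].
Qed.

Lemma atleast_list n P :
  atleast n P -> exists l, [/\ List.NoDup l, size l = n & forall x, List.In x l -> P x].
Proof.
elim: n P => [|n IH] P /=; first by exists nil; split=> //; constructor.
move=> [d [hd /IH [l [h1 h2 h3]]]]; exists (d :: l); split=> [| |x [<-|/h3 []]] //=.
- by constructor=> // /h3 [].
- by rewrite h2.
Qed.

Lemma not_atleast_enum n P : ~ atleast n P ->
  exists l, [/\ List.NoDup l, size l < n & forall x, P x <-> List.In x l].
Proof.
elim: n P => [|n IH] P /= h; first by [].
case: (pselect (exists d, P d)) => [[d hd]|hn].
- have /IH [l [h1 h2 h3]] : ~ atleast n (fun x => P x /\ x <> d) by move=> hh; apply: h; exists d.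
  exists (d :: l); split=> // [|x].
  + by constructor=> // /h3 [].
  + split=> [hx|[<-|/h3 []] //].
    by case: (pselect (x = d)) => [->|ne]; [left | right; apply/h3].
- exists nil; split=> [|//|x]; first by constructor.
  by split=> // hx; apply: hn; exists x.
Qed.

Lemma atleast_diff_list n P (S : list D) :
  atleast (n + size S) P -> atleast n (fun x => P x /\ ~ List.In x S).
Proof.
elim: S P => [|s S IH] P.
  by rewrite addn0; apply: sub_atleast => x hx; split.
rewrite /= addnS => /(atleastS_rem s) /IH; apply: sub_atleast => x [[h1 h2] h3].
by split=> // -[e|hin]; [rewrite e in h2 | apply: h3].
Qed.

End Atleast.

Fixpoint rank (A : Type) (f : form A) : nat :=
  match f with
  | FAnd f1 f2 | FOr f1 f2 => maxn (rank f1) (rank f2)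
  | FEx _ f1 | FAll _ f1 => (rank f1).+1
  | _ => 0
  end.

Definition rel_assign (D1 D2 : Type) (Z : D1 -> D2 -> Prop) (g1 : assign D1) (g2 : assign D2) :=
  forall x, match g1 x, g2 x with
            | None, None => True
            | Some d1, Some d2 => Z d1 d2
            | _, _ => False
            end.

Section RelatedAssignments.
Variables (D1 D2 : Type) (Z : D1 -> D2 -> Prop).
Lemma rel_assign_sym g1 g2 : rel_assign Z g1 g2 -> rel_assign (fun a b => Z b a) g2 g1.
Proof. by move=> h x; move: (h x); case: (g1 x); case: (g2 x). Qed.

Lemma rel_assign_upd g1 g2 x d1 d2 :
  rel_assign Z g1 g2 -> Z d1 d2 -> rel_assign Z (upd g1 x d1) (upd g2 x d2).
Proof. by move=> h hz y; rewrite /upd; case: eqP => _ //; apply: h. Qed.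

Lemma rel_assign_some1 g1 g2 x d1 :
  rel_assign Z g1 g2 -> g1 x = Some d1 -> exists2 d2, g2 x = Some d2 & Z d1 d2.
Proof. by move=> /(_ x) + e; rewrite e; case: (g2 x) => // d2 hz; exists d2. Qed.

Lemma rel_assign_some2 g1 g2 x d2 :
  rel_assign Z g1 g2 -> g2 x = Some d2 -> exists2 d1, g1 x = Some d1 & Z d1 d2.
Proof. by move=> /(_ x) + e; rewrite e; case: (g1 x) => // d1 hz; exists d1. Qed.

Lemma rel_assign_lift g1 g2 x (P1 : D1 -> Prop) (P2 : D2 -> Prop) :
  rel_assign Z g1 g2 -> (forall d1 d2, Z d1 d2 -> P1 d1 <-> P2 d2) ->
  (exists d, g1 x = Some d /\ P1 d) <-> (exists d, g2 x = Some d /\ P2 d).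
Proof.
move=> hg hP; split=> -[d [e h]].
- by case: (rel_assign_some1 hg e) => d2 e2 hz; exists d2; split=> //; apply/(hP _ _ hz).
- by case: (rel_assign_some2 hg e) => d1 e1 hz; exists d1; split=> //; apply/(hP _ _ hz).
Qed.

End RelatedAssignments.

Lemma sub_rel_assign D1 D2 (Z Z' : D1 -> D2 -> Prop) g1 g2 :
  (forall a b, Z a b -> Z' a b) -> rel_assign Z g1 g2 -> rel_assign Z' g1 g2.
Proof. by move=> hz h x; move: (h x); case: (g1 x) => [d1|]; case: (g2 x) => [d2|] //; apply: hz. Qed.

Section Bisimulation.
Variables (A D1 D2 : Type) (V1 : A -> D1 -> Prop) (V2 : A -> D2 -> Prop).
Variable R : D1 -> D2 -> Prop.
Hypotheses (R_total : forall d1, exists d2, R d1 d2) (R_onto : forall d2, exists d1, R d1 d2).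
Hypothesis R_col : forall d1 d2, R d1 d2 -> forall a, V1 a d1 <-> V2 a d2.

Lemma sat_bisim f : eq_free f ->
  forall g1 g2, rel_assign R g1 g2 -> (sat V1 g1 f <-> sat V2 g2 f).
Proof.
elim: f => //= [a x _ g1 g2 hg|a x _ g1 g2 hg|f1 IH1 f2 IH2 [h1 h2] g1 g2 hg
               |f1 IH1 f2 IH2 [h1 h2] g1 g2 hg|x f IH hf g1 g2 hg|x f IH hf g1 g2 hg].
- by apply: rel_assign_lift hg _ => d1 d2 /R_col.
- by apply: rel_assign_lift hg _ => d1 d2 /R_col ->.
- by rewrite (IH1 h1 g1 g2 hg) (IH2 h2 g1 g2 hg).
- by rewrite (IH1 h1 g1 g2 hg) (IH2 h2 g1 g2 hg).
- split=> -[d h].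
  + by case: (R_total d) => d2 hz; exists d2; apply/(IH hf _ _ (rel_assign_upd x hg hz)).
  + by case: (R_onto d) => d1 hz; exists d1; apply/(IH hf _ _ (rel_assign_upd x hg hz)).
- split=> h d.
  + by case: (R_onto d) => d1 hz; apply/(IH hf _ _ (rel_assign_upd x hg hz)).
  + by case: (R_total d) => d2 hz; apply/(IH hf _ _ (rel_assign_upd x hg hz)).
Qed.

End Bisimulation.

Section Colours.
Variable A : finType.

Definition col (D : Type) (V : A -> D -> Prop) (d : D) : {set A} := [set a | `[< V a d >]].

Lemma colP (D : Type) (V : A -> D -> Prop) d a : reflect (V a d) (a \in col V d).
Proof. by rewrite inE; apply: asboolP. Qed.

Lemma col_eqP D1 D2 (V1 : A -> D1 -> Prop) (V2 : A -> D2 -> Prop) d1 d2 :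
  col V1 d1 = col V2 d2 <-> forall a, V1 a d1 <-> V2 a d2.
Proof.
split=> [e a|h]; first by split=> /colP; [rewrite e | rewrite -e] => /colP.
by apply/setP => a; apply/colP/colP => /h.
Qed.

Section EhrenfeuchtFraisse.
Variables (D1 D2 : Type) (V1 : A -> D1 -> Prop) (V2 : A -> D2 -> Prop).

(* A winning position of the duplicator with [r] rounds left: a colour-preserving partial
   bijection outside of which every colour is realised at least [r] times on both sides. *)
Definition ef_rel (Z : D1 -> D2 -> Prop) (r : nat) :=
  [/\ (forall d1 d2 e2, Z d1 d2 -> Z d1 e2 -> d2 = e2),
      (forall d1 e1 d2, Z d1 d2 -> Z e1 d2 -> d1 = e1),
      (forall d1 d2, Z d1 d2 -> col V1 d1 = col V2 d2),
      (forall d1, ~ (exists d2, Z d1 d2) ->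
         atleast r (fun y => col V1 y = col V1 d1 /\ ~ exists z, Z y z) /\
         atleast r (fun y => col V2 y = col V1 d1 /\ ~ exists z, Z z y)) &
      (forall d2, ~ (exists d1, Z d1 d2) ->
         atleast r (fun y => col V1 y = col V2 d2 /\ ~ exists z, Z y z) /\
         atleast r (fun y => col V2 y = col V2 d2 /\ ~ exists z, Z z y))].

Lemma ef_rel_leq Z r r' : r' <= r -> ef_rel Z r -> ef_rel Z r'.
Proof.
move=> hr [h1 h2 h3 h4 h5]; split=> // [d1 /h4|d2 /h5] [a b]; split; exact: atleast_leq hr _.
Qed.

Lemma ef_rel_forth Z r g1 g2 x d1 : ef_rel Z r.+1 -> rel_assign Z g1 g2 ->
  exists d2 Z', ef_rel Z' r /\ rel_assign Z' (upd g1 x d1) (upd g2 x d2).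
Proof.
move=> hE hg; case: (pselect (exists d2, Z d1 d2)) => [[d2 hz]|hn].
  by exists d2, Z; split; [apply: ef_rel_leq hE | apply: rel_assign_upd].
case: (hE) => h1 h2 h3 h4 h5.
case: (h4 d1 hn) => _ /(atleast_exists (ltn0Sn r)) [d2 [hc2 hn2]].
have still_free1 y : ~ (exists z, Z y z) -> y <> d1 ->
    ~ exists z, Z y z \/ (y = d1 /\ z = d2).
  by move=> c2 c3 [z [z1|[z2 _]]]; [apply: c2; exists z | apply: c3].
have still_free2 y : ~ (exists z, Z z y) -> y <> d2 ->
    ~ exists z, Z z y \/ (z = d1 /\ y = d2).
  by move=> c2 c3 [z [z1|[_ z2]]]; [apply: c2; exists z | apply: c3].
exists d2, (fun a b => Z a b \/ (a = d1 /\ b = d2)); split; last first.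
  by apply: rel_assign_upd; [apply: sub_rel_assign hg => a b h; left | right].
split.
- move=> a b b' [z|[e1 e2]] [z'|[e3 e4]]; subst => //.
  + exact: h1 z z'.
  + by case: hn; exists b.
  + by case: hn; exists b'.
- move=> a a' b [z|[e1 e2]] [z'|[e3 e4]]; subst => //.
  + exact: h2 z z'.
  + by case: hn2; exists a.
  + by case: hn2; exists a'.
- by move=> a b [z|[-> ->]]; [apply: h3 |].
- move=> e1 hne.
  have hz : ~ exists z, Z e1 z by move=> [z hz]; apply: hne; exists z; left.
  case: (h4 e1 hz) => a b; split.
  + by apply: sub_atleast (atleastS_rem d1 a) => y [[? c2] c3]; split=> //; apply: still_free1.
  + by apply: sub_atleast (atleastS_rem d2 b) => y [[? c2] c3]; split=> //; apply: still_free2.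
- move=> e2 hne.
  have hz : ~ exists z, Z z e2 by move=> [z hz]; apply: hne; exists z; left.
  case: (h5 e2 hz) => a b; split.
  + by apply: sub_atleast (atleastS_rem d1 a) => y [[? c2] c3]; split=> //; apply: still_free1.
  + by apply: sub_atleast (atleastS_rem d2 b) => y [[? c2] c3]; split=> //; apply: still_free2.
Qed.

End EhrenfeuchtFraisse.

Lemma ef_rel_sym D1 D2 (V1 : A -> D1 -> Prop) (V2 : A -> D2 -> Prop) Z r :
  ef_rel V1 V2 Z r -> ef_rel V2 V1 (fun a b => Z b a) r.
Proof.
case=> h1 h2 h3 h4 h5; split=> [d1 d2 e2 z1 z2|d1 e1 d2 z1 z2|d1 d2 z|d1 /h5 []|d2 /h4 []] //.
- exact: h2 z1 z2.
- exact: h1 z1 z2.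
- by rewrite (h3 _ _ z).
Qed.

Lemma ef_rel_back D1 D2 (V1 : A -> D1 -> Prop) (V2 : A -> D2 -> Prop) Z r g1 g2 x d2 :
  ef_rel V1 V2 Z r.+1 -> rel_assign Z g1 g2 ->
  exists d1 Z', ef_rel V1 V2 Z' r /\ rel_assign Z' (upd g1 x d1) (upd g2 x d2).
Proof.
move=> /ef_rel_sym hE /rel_assign_sym hg.
have [d1 [Z' [h1 h2]]] := ef_rel_forth x d2 hE hg.
by exists d1, (fun a b => Z' b a); split; [apply: ef_rel_sym h1 | apply: rel_assign_sym h2].
Qed.

Theorem sat_ef_rel D1 D2 (V1 : A -> D1 -> Prop) (V2 : A -> D2 -> Prop) (f : form A) r Z g1 g2 :
  rank f <= r -> ef_rel V1 V2 Z r -> rel_assign Z g1 g2 -> (sat V1 g1 f <-> sat V2 g2 f).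
Proof.
elim: f r Z g1 g2 => //=
  [a x|a x|x y|x y|f1 IH1 f2 IH2|f1 IH1 f2 IH2|x f IH|x f IH] r Z g1 g2 hr hE hg;
  case: hE (hE) => h1 h2 hc _ _ hE.
- by apply: rel_assign_lift hg _ => d1 d2 /hc /col_eqP.
- by apply: rel_assign_lift hg _ => d1 d2 /hc /col_eqP ->.
- split=> -[d [ex ey]].
  + case: (rel_assign_some1 hg ex) (rel_assign_some1 hg ey) => d2 ex2 z1 [e2 ey2 z2].
    by exists d2; split=> //; rewrite ey2 (h1 _ _ _ z1 z2).
  + case: (rel_assign_some2 hg ex) (rel_assign_some2 hg ey) => d1 ex1 z1 [e1 ey1 z2].
    by exists d1; split=> //; rewrite ey1 (h2 _ _ _ z1 z2).
- split=> -[d [e [ex [ey ne]]]].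
  + case: (rel_assign_some1 hg ex) (rel_assign_some1 hg ey) => d2 ex2 z1 [e2 ey2 z2].
    by exists d2, e2; do 2!split=> //; move=> he; subst; apply: ne; apply: h2 z1 z2.
  + case: (rel_assign_some2 hg ex) (rel_assign_some2 hg ey) => d1 ex1 z1 [e1 ey1 z2].
    by exists d1, e1; do 2!split=> //; move=> he; subst; apply: ne; apply: h1 z1 z2.
- move: hr; rewrite geq_max => /andP [r1 r2].
  by rewrite (IH1 r Z g1 g2 r1 hE hg) (IH2 r Z g1 g2 r2 hE hg).
- move: hr; rewrite geq_max => /andP [r1 r2].
  by rewrite (IH1 r Z g1 g2 r1 hE hg) (IH2 r Z g1 g2 r2 hE hg).
- case: r hr hE => // r hr hE; split=> -[d h].
  + have [d2 [Z' [h1' h2']]] := ef_rel_forth x d hE hg.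
    by exists d2; apply/(IH r Z' _ _ hr h1' h2').
  + have [d1 [Z' [h1' h2']]] := ef_rel_back x d hE hg.
    by exists d1; apply/(IH r Z' _ _ hr h1' h2').
- case: r hr hE => // r hr hE; split=> h d.
  + have [d1 [Z' [h1' h2']]] := ef_rel_back x d hE hg.
    by apply/(IH r Z' _ _ hr h1' h2').
  + have [d2 [Z' [h1' h2']]] := ef_rel_forth x d hE hg.
    by apply/(IH r Z' _ _ hr h1' h2').
Qed.

Corollary holds_ef_rel D1 D2 (V1 : A -> D1 -> Prop) (V2 : A -> D2 -> Prop) (f : form A) r Z :
  rank f <= r -> ef_rel V1 V2 Z r -> (holds V1 f <-> holds V2 f).
Proof. by move=> hr hE; apply: (sat_ef_rel hr hE). Qed.

End Colours.

(** * The FO normal form *)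

Section ColourFormulas.
Variables (A : finType) (B : {set A}).

Definition atomsB (c : {set A}) (x : var) : form A := bigAnd (enum (c :&: B)) (fun b => FAt b x).

Definition typeNB (c : {set A}) (x : var) : form A :=
  bigAnd (enum (~: B)) (fun a => if a \in c then FAt a x else FNAt a x).

Lemma sat_atomsB D (V : A -> D -> Prop) g x d c :
  g x = Some d -> (sat V g (atomsB c x) <-> c :&: B \subset col V d).
Proof.
move=> e; rewrite sat_bigAnd; split=> [h|/subsetP h b].
- apply/subsetP => b hb; have /= [d' [e' /colP]] : sat V g (FAt b x) by apply/h/In_mem; rewrite mem_enum.
  by rewrite e in e'; case: e' => ->.
- by move/In_mem; rewrite mem_enum => /h /colP hb; exists d.
Qed.

Lemma sat_typeNB D (V : A -> D -> Prop) g x d c :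
  g x = Some d -> (sat V g (typeNB c x) <-> c :\: B = col V d :\: B).
Proof.
move=> e; rewrite sat_bigAnd; split=> [h|hs a].
- apply/setP => a; rewrite !inE; case ha: (a \in B) => //=.
  have : sat V g (if a \in c then FAt a x else FNAt a x) by apply/h/In_mem; rewrite mem_enum inE ha.
  case: ifP => hc /= [d' [e' h']]; rewrite e in e'; case: e' h' => <- h'.
  + by rewrite asboolT.
  + by rewrite asboolF.
- move/In_mem; rewrite mem_enum inE => ha.
  have -> : (a \in c) = (a \in col V d) by move/setP: hs => /(_ a); rewrite !inE ha.
  case: ifP => [/colP h|/negP hn]; exists d; split=> //.
  by move/colP.
Qed.

Lemma free_atomsB y c x : free_in y (atomsB c x) -> y = x.
Proof. by case/free_bigAnd. Qed.

Lemma free_typeNB y c x : free_in y (typeNB c x) -> y = x.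
Proof. by case/free_bigAnd => a _; case: (a \in c). Qed.

Lemma syn_cont_atomsB L c x : syn_cont L B (atomsB c x).
Proof. by apply: syn_cont_bigAnd => b /In_mem; rewrite mem_enum inE => /andP [_ hb]; apply: SC_at. Qed.

Lemma eq_free_typeNB c x : eq_free (typeNB c x).
Proof. by apply: eq_free_bigAnd => a _; case: (a \in c). Qed.

Lemma avoids_typeNB c x : avoids B (typeNB c x).
Proof. by apply: avoids_bigAnd => a /In_mem; rewrite mem_enum inE; case: (a \in c). Qed.

Lemma leB_col D (U V : A -> D -> Prop) x :
  leB B U V -> col U x :\: B = col V x :\: B /\ col U x :&: B \subset col V x.
Proof.
move=> h; split.
- apply/setP => a; rewrite !in_setD; case ha: (a \in B) => //=.
  by apply/colP/colP => /(proj2 (h a) (negbT ha) x).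
- by apply/subsetP => a; rewrite in_setI => /andP [/colP hu hb]; apply/colP; apply: (proj1 (h a) hb).
Qed.

Lemma leB_fin_support D (U : A -> D -> Prop) :
  (forall b, b \in B -> exists l : seq D, forall d, U b d -> List.In d l) ->
  exists S : seq D, forall b, b \in B -> forall d, U b d -> List.In d S.
Proof.
move=> H; suff [S hS] : exists S : seq D, forall b, b \in enum B -> forall d, U b d -> List.In d S.
  by exists S => b hb; apply: hS; rewrite mem_enum.
have : {subset enum B <= B} by move=> b; rewrite mem_enum.
elim: (enum B) => [|b bs IH] hbs; first by exists [::].
case: IH => [b' hb'|S hS]; first by apply: hbs; rewrite in_cons hb' orbT.
case: (H b) => [|l hl]; first by apply: hbs; rewrite mem_head.
exists (l ++ S) => b'; rewrite in_cons => /orP [/eqP ->|hb'] d hd; apply/List.in_or_app.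
- by left; apply: hl.
- by right; apply: hS hb' d hd.
Qed.

End ColourFormulas.

Section FONormalForm.
Variables (A : finType) (B : {set A}).

Definition chiFO (R E : {set {set A}}) : form A :=
  FAnd (bigAnd (enum R) (fun c => FEx 0 (FAnd (atomsB B c 0) (typeNB B c 0))))
       (FAnd (bigAnd (enum E) (fun e => FEx 0 (typeNB B e 0)))
             (FAll 0 (bigOr (enum E) (fun e => typeNB B e 0)))).

Lemma sat_chiFO D (V : A -> D -> Prop) g R E :
  sat V g (chiFO R E) <->
  [/\ forall c, c \in R -> exists d, c :&: B \subset col V d /\ c :\: B = col V d :\: B,
      forall e, e \in E -> exists d, e :\: B = col V d :\: B &
      forall d, exists2 e, e \in E & e :\: B = col V d :\: B].
Proof.
have inE' (S : {set {set A}}) c : List.In c (enum S) <-> c \in S by rewrite In_mem mem_enum.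
rewrite /chiFO /= !sat_bigAnd; split=> [[h1 [h2 h3]]|[h1 h2 h3]]; do ?split.
- move=> c /inE' /h1 /= [d [ha hb]]; exists d.
  by split; [apply/(sat_atomsB _ _ _ (upd_same g 0 d)) | apply/(sat_typeNB _ _ _ (upd_same g 0 d))].
- by move=> e /inE' /h2 /= [d /(sat_typeNB _ _ _ (upd_same g 0 d)) hb]; exists d.
- move=> d; case/sat_bigOr: (h3 d) => e /inE' he /(sat_typeNB _ _ _ (upd_same g 0 d)).
  by exists e.
- move=> c /inE' /h1 [d [ha hb]] /=; exists d.
  by split; [apply/(sat_atomsB _ _ _ (upd_same g 0 d)) | apply/(sat_typeNB _ _ _ (upd_same g 0 d))].
- move=> e /inE' /h2 [d hb] /=; exists d; exact/(sat_typeNB _ _ _ (upd_same g 0 d)).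
- move=> d; case: (h3 d) => e he hb; apply/sat_bigOr; exists e; first exact/inE'.
  exact/(sat_typeNB _ _ _ (upd_same g 0 d)).
Qed.

Lemma sentence_chiFO R E : sentence (chiFO R E).
Proof.
move=> y /= [|[]].
- by case/free_bigAnd => c _ /= [ne [/free_atomsB|/free_typeNB]].
- by case/free_bigAnd => c _ /= [ne /free_typeNB].
- by move=> [ne /free_bigOr [c _ /free_typeNB]].
Qed.

Lemma eq_free_chiFO R E : eq_free (chiFO R E).
Proof.
split; [|split].
- apply: eq_free_bigAnd => c _ /=; split; last exact: eq_free_typeNB.
  exact: eq_free_bigAnd.
- by apply: eq_free_bigAnd => e _; apply: eq_free_typeNB.
- by apply: eq_free_bigOr => e _; apply: eq_free_typeNB.
Qed.

Lemma syn_cont_chiFO R E : syn_cont FO B (chiFO R E).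
Proof.
apply: SC_and.
  apply: syn_cont_bigAnd => c _; apply/SC_ex/SC_and; first exact: syn_cont_atomsB.
  by apply: SC_base; [apply: eq_free_typeNB | apply: avoids_typeNB].
apply: SC_base; first by case: (eq_free_chiFO R E).
split; first by apply: avoids_bigAnd => e _; apply: avoids_typeNB.
by apply: avoids_bigOr => e _; apply: avoids_typeNB.
Qed.

Lemma holds_copies (phi : form A) D (V : A -> D -> Prop) : eq_free phi ->
  holds V phi <-> holds (fun a (x : D * nat) => V a x.1) phi.
Proof.
move=> hef; apply: (sat_bisim (R := fun d (x : D * nat) => x.1 = d)) => //.
- by move=> d; exists (d, 0).
- by move=> x; exists x.1.
- by move=> d x <-.
Qed.

Definition colsB D (U : A -> D -> Prop) : {set {set A}} :=
  [set c | `[< exists x, col U x = c >] & c :&: B != set0].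
Definition colsNB D (U : A -> D -> Prop) : {set {set A}} :=
  [set c | `[< exists x, col U x = c >] & c :&: B == set0].

Lemma setD_disjoint (c : {set A}) : c :&: B == set0 -> c :\: B = c.
Proof. by rewrite setI_eq0 => /setDidPl. Qed.

Section ChiFOEntails.
Variables (D1 D : Type) (U : A -> D1 -> Prop) (V : A -> D -> Prop).
Hypothesis hR : forall c, c \in colsB U ->
  exists d, c :&: B \subset col V d /\ c :\: B = col V d :\: B.
Hypothesis hE : forall e, e \in colsNB U -> exists d, e :\: B = col V d :\: B.
Hypothesis hAll : forall d, exists2 e, e \in colsNB U & e :\: B = col V d :\: B.

(* The copy [(d, k.+1)] of [d] realises the [k]-th colour of [colsB U] when [d] can carry it;
   all other copies keep the B-free part of the colour of [d]. *)
Definition tagged (y : D * nat) (c : {set A}) :=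
  [/\ c \in colsB U, y.2 = (enum_rank c).+1, c :&: B \subset col V y.1 & c :\: B = col V y.1 :\: B].

Definition Wcopies (a : A) (y : D * nat) :=
  if a \in B then exists c, tagged y c /\ a \in c else V a y.1.

Lemma tagged_uniq y c c' : tagged y c -> tagged y c' -> c = c'.
Proof.
move=> [_ e1 _ _] [_ e2 _ _]; apply/enum_rank_inj/val_inj/succn_inj.
by rewrite -e1 -e2.
Qed.

Lemma col_Wcopies_tagged y c : tagged y c -> col Wcopies y = c.
Proof.
move=> hc; apply/setP => a; rewrite /Wcopies; case ha: (a \in B).
- apply/colP/idP => [|hac]; last by rewrite ha; exists c.
  by rewrite ha => -[c' [hc' hac]]; rewrite (tagged_uniq hc hc').
- case: hc => _ _ _ /setP /(_ a); rewrite !in_setD ha /= => ->.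
  by apply/colP/colP; rewrite ha.
Qed.

Lemma col_Wcopies_untagged y : ~ (exists c, tagged y c) -> col Wcopies y = col V y.1 :\: B.
Proof.
move=> hn; apply/setP => a; rewrite in_setD /Wcopies; case ha: (a \in B) => /=.
- by apply/colP; rewrite ha => -[c [hc _]]; apply: hn; exists c.
- by apply/colP/colP; rewrite ha.
Qed.

Lemma Wcopies_leB : leB B Wcopies (fun a (y : D * nat) => V a y.1).
Proof.
move=> a; split=> ha y; rewrite /Wcopies ?ha ?(negbTE ha) //.
by move=> [c [[_ _ /subsetP hsub _] hac]]; apply/colP/hsub; rewrite inE hac ha.
Qed.

Lemma Wcopies_total x : exists y, col U x = col Wcopies y.
Proof.
case: (boolP (col U x :&: B == set0)) => h0.
- have hx : col U x \in colsNB U by rewrite inE h0 andbT; apply/asboolP; exists x.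
  case: (hE hx) => d hd; exists (d, 0); rewrite col_Wcopies_untagged; last by move=> [c [_ /= ]].
  by rewrite -hd setD_disjoint.
- have hx : col U x \in colsB U by rewrite inE h0 andbT; apply/asboolP; exists x.
  case: (hR hx) => d [h1 h2]; exists (d, (enum_rank (col U x)).+1).
  by rewrite (@col_Wcopies_tagged _ (col U x)).
Qed.

Lemma Wcopies_onto y : exists x, col U x = col Wcopies y.
Proof.
case: (pselect (exists c, tagged y c)) => [[c hc]|hn].
- rewrite (col_Wcopies_tagged hc); case: hc; rewrite inE => /andP [/asboolP [x hx] _] _ _ _.
  by exists x.
- rewrite (col_Wcopies_untagged hn); case: (hAll y.1) => e; rewrite inE => /andP [/asboolP [x hx] h0].
  by rewrite -hx setD_disjoint ?hx // => <-; exists x.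
Qed.

End ChiFOEntails.

Lemma chiFO_entails (phi : form A) D1 (U : A -> D1 -> Prop) :
  eq_free phi -> monotone_in B phi -> holds U phi ->
  forall D (V : A -> D -> Prop), holds V (chiFO (colsB U) (colsNB U)) -> holds V phi.
Proof.
move=> hef hmono hU D V /sat_chiFO [hR hE hAll]; apply/(holds_copies _ hef).
apply: hmono (Wcopies_leB U V).
have col_rel x y : col U x = col (Wcopies U V) y -> forall a, U a x <-> Wcopies U V a y.
  by move/col_eqP.
exact: (sat_bisim (Wcopies_total hR hE) (Wcopies_onto hAll) col_rel hef _).1 hU.
Qed.

Lemma chiFO_copies D (V : A -> D -> Prop) (U : A -> D * nat -> Prop) i0 :
  leB B U (fun a x => V a x.1) -> (forall d b, b \in B -> ~ U b (d, i0)) ->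
  holds V (chiFO (colsB U) (colsNB U)).
Proof.
move=> hUV hfree; apply/sat_chiFO; split.
- move=> c; rewrite inE => /andP [/asboolP [x <-] _]; exists x.1.
  by case: (leB_col x hUV).
- move=> e; rewrite inE => /andP [/asboolP [x <-] _]; exists x.1.
  by case: (leB_col x hUV).
- move=> d; exists (col U (d, i0)); last by case: (leB_col (d, i0) hUV).
  rewrite inE; apply/andP; split; first by apply/asboolP; exists (d, i0).
  apply/eqP/setP => b; rewrite in_setI in_set0; apply/andP => -[/colP hu hb].
  exact: hfree hb hu.
Qed.

Lemma fresh_index D (S : seq (D * nat)) : exists i, forall d, ~ List.In (d, i) S.
Proof.
suff [i hi] : exists i, forall p, List.In p S -> p.2 < i.
  by exists i => d /hi; rewrite ltnn.
elim: S => [|p S [i hi]]; first by exists 0.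
exists (maxn p.2.+1 i) => q [<-|/hi hq]; first by rewrite leq_max leqnn.
by rewrite leq_max hq orbT.
Qed.

Lemma FO_normal_form (phi : form A) : eq_free phi -> continuous_in B phi ->
  exists psi, [/\ eq_free psi, sentence psi, syn_cont FO B psi & equiv_sent phi psi].
Proof.
move=> hef [hmono hcont].
pose entails (p : {set {set A}} * {set {set A}}) :=
  `[< forall D (V : A -> D -> Prop), holds V (chiFO p.1 p.2) -> holds V phi >].
exists (bigOr (enum entails) (fun p => chiFO p.1 p.2)); split.
- by apply: eq_free_bigOr => p _; apply: eq_free_chiFO.
- by move=> y /free_bigOr [p _]; apply: sentence_chiFO.
- by apply: syn_cont_bigOr => p _; apply: syn_cont_chiFO.
move=> D V; split=> [hV|/sat_bigOr [p /In_mem]]; last by rewrite mem_enum => /asboolP; apply.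
have /hcont [U [[hUV /leB_fin_support [S hS]] hU]] := (holds_copies V hef).1 hV.
have [i0 hi0] := fresh_index S.
apply/sat_bigOr; exists (colsB U, colsNB U).
- by apply/In_mem; rewrite mem_enum; apply/asboolP; apply: chiFO_entails hef hmono hU.
- by apply: chiFO_copies hUV _ => d b /hS hSb /hSb /hi0.
Qed.

End FONormalForm.

(** * A bounded witness of continuity for FOE *)

Section Inflation.
Variables (A : finType) (q : nat) (D : Type) (V : A -> D -> Prop).

Definition nslots := #|{: {set A} * 'I_q}|.

Lemma leq_q_nslots : q <= nslots.
Proof. by rewrite /nslots card_prod card_ord leq_pmull //; apply/card_gt0P; exists set0. Qed.

Definition big (d : D) := atleast nslots (fun y => col V y = col V d).

Lemma big_col d d' : col V d = col V d' -> big d -> big d'.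
Proof. by rewrite /big => ->. Qed.

Definition infl := (D + {p : D * nat | big p.1})%type.
Definition orig (x : infl) : D := match x with inl d => d | inr p => (sval p).1 end.
Definition Vinfl (a : A) (x : infl) := V a (orig x).

Lemma orig_big x : (exists d, x = inl d /\ ~ big d) \/ big (orig x).
Proof.
case: x => [d|[p hp]] /=; last by right.
by case: (pselect (big d)) => h; [right | left; exists d].
Qed.

Let copy (d : D) (x : infl) := x = inl d /\ ~ big d.

Lemma big_unmatched d : big d ->
  atleast q (fun y => col V y = col V d /\ ~ exists x, copy y x) /\
  atleast q (fun x => col Vinfl x = col V d /\ ~ exists y, copy y x).
Proof.
move=> hd; have h1 : atleast q (fun y => col V y = col V d /\ ~ exists x, copy y x).
  apply: atleast_leq leq_q_nslots _; apply: sub_atleast (hd) => y hy.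
  by split=> // -[x [_]]; apply; apply: big_col (esym hy) hd.
have inl_inj : injective (@inl D {p : D * nat | big p.1}) by move=> ? ? [].
split=> //; apply: atleast_map inl_inj _ h1 => y [hy hn].
by split=> // -[z [[<-] hz]]; apply: hn; exists (inl y).
Qed.

Lemma ef_rel_infl : ef_rel V Vinfl copy q.
Proof.
split.
- by move=> d x y [-> _] [-> _].
- by move=> d e x [-> _] [[->] _].
- by move=> d x [-> _].
- move=> d hn; have hd : big d by apply: contrapT => hb; apply: hn; exists (inl d).
  exact: big_unmatched hd.
- move=> x hn; case: (orig_big x) => [[d [e hb]]|hb]; first by case: hn; exists d.
  exact: big_unmatched hb.
Qed.

Lemma holds_infl phi : rank phi <= q -> holds V phi -> holds Vinfl phi.
Proof. by move=> hr; apply: (holds_ef_rel hr ef_rel_infl).1. Qed.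

End Inflation.

Section Trimming.
Variables (A : finType) (B : {set A}) (q : nat) (D : Type) (V : A -> D -> Prop).
Local Notation nslots := (nslots A q).
Local Notation big := (big q V).
Local Notation infl := (infl q V).
Local Notation orig := (@orig A q D V).
Variables (U : A -> infl -> Prop) (S : seq infl).
Hypothesis hUV : leB B U (@Vinfl A q D V).
Hypothesis hS : forall b, b \in B -> forall x, U b x -> List.In x S.

Definition big_class (c : {set A}) := atleast nslots (fun y => col V y = c).

Definition cell (c e : {set A}) (x : infl) := col V (orig x) = c /\ col U x = e.
Definition big_cell c e := atleast q (cell c e).

Lemma class_list_exists c : exists l : seq D, size l <= nslots /\
  (big_class c -> [/\ List.NoDup l, size l = nslots & forall y, List.In y l -> col V y = c]).
Proof.
case: (pselect (big_class c)) => [/atleast_list [l [h1 h2 h3]]|h]; last by exists nil.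
by exists l; rewrite -h2.
Qed.

Lemma cell_list_exists c e : exists l : seq infl,
  ~ big_cell c e -> [/\ List.NoDup l, size l < q & forall x, cell c e x <-> List.In x l].
Proof.
case: (pselect (big_cell c e)) => [h|/not_atleast_enum [l hl]]; first by exists nil.
by exists l.
Qed.

Lemma small_class_list_exists c : exists l : seq D, size l <= nslots /\
  (~ big_class c -> forall y, col V y = c -> List.In y l).
Proof.
case: (pselect (big_class c)) => [h|/not_atleast_enum [l [_ h2 h3]]]; first by exists nil.
by exists l; split=> [|_ y /h3]; first exact: ltnW.
Qed.

Definition class_list c := sval (cid (class_list_exists c)).
Definition cell_list c e := sval (cid (cell_list_exists c e)).
Definition small_class_list c := sval (cid (small_class_list_exists c)).
Let class_list_spec c := proj2_sig (cid (class_list_exists c)).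
Let cell_list_spec c e := proj2_sig (cid (cell_list_exists c e)).
Let small_class_list_spec c := proj2_sig (cid (small_class_list_exists c)).

Implicit Types (s : {set A} * 'I_q) (d : D).

Definition slot (d : D) (s : {set A} * 'I_q) : D := List.nth (enum_rank s) (class_list (col V d)) d.
Definition unslot (d : D) : option ({set A} * 'I_q) := [pick s | `[< slot d s = d >] ].

Lemma slot_index d s : big d -> enum_rank s < size (class_list (col V d)).
Proof.
move=> hb; case: (class_list_spec (col V d)) => _ /(_ hb) [_ hsize _].
by have -> : size (class_list (col V d)) = nslots := hsize; apply: ltn_ord.
Qed.

Lemma slot_in d s : big d -> List.In (slot d s) (class_list (col V d)).
Proof. by move=> hb; apply/List.nth_In/ltP/slot_index. Qed.

Lemma slot_col d s : big d -> col V (slot d s) = col V d.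
Proof. by move=> hb; case: (class_list_spec (col V d)) => _ /(_ hb) [_ _]; apply; apply: slot_in. Qed.

Lemma slot_inj d : big d -> injective (slot d).
Proof.
move=> hb s s'; case: (class_list_spec (col V d)) => _ /(_ hb) [hnd _ _].
move/((List.NoDup_nth _ d).1 hnd _ _ (ltP (slot_index s hb)) (ltP (slot_index s' hb))).
by move=> /val_inj /enum_rank_inj.
Qed.

Lemma slot_colE d d' s : col V d = col V d' -> big d -> slot d s = slot d' s.
Proof. by move=> e hb; rewrite /slot -e; apply/List.nth_indep/ltP/slot_index. Qed.

Lemma slot_unslot d s : unslot d = Some s -> slot d s = d.
Proof. by rewrite /unslot; case: pickP => // s' /asboolP h [<-]. Qed.

Lemma unslot_slot d s : big d -> unslot (slot d s) = Some s.
Proof.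
move=> hb; have hb' : big (slot d s) by apply: big_col (esym (slot_col s hb)) hb.
rewrite /unslot; case: pickP => [s' /asboolP|/(_ s) /asboolP []]; last first.
  by rewrite (slot_colE s (slot_col s hb)).
by rewrite (slot_colE s' (slot_col s hb)) // => /slot_inj ->.
Qed.

(* Each big colour class c reserves the slots (e, j), j < q, for every colour e.  The element in
   slot (e, j) gets colour e when the cell (c, e) of U has more than j elements, and it is then
   matched with the j-th of them unless the cell is big; every other element of a big class gets
   the B-free part c :\: B of its colour, which is a big cell since the copies outside the finite
   B-support of U have that colour.  Small classes are not inflated and keep the colour under U. *)
Definition trim_col d : {set A} :=
  if `[< big d >] then
    if unslot d is Some (e, j) then
      if `[< big_cell (col V d) e >] || (j < size (cell_list (col V d) e)) then e else col V d :\: B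
    else col V d :\: B
  else col U (inl d).

Definition Wtrim (a : A) d := a \in trim_col d.

Definition matched d (x : infl) :=
  (~ big d /\ x = inl d) \/
  (big d /\ exists e (j : 'I_q), [/\ unslot d = Some (e, j), ~ big_cell (col V d) e &
                                    List.nth_error (cell_list (col V d) e) j = Some x]).

Lemma col_Wtrim d : col Wtrim d = trim_col d.
Proof. by apply/setP => a; rewrite inE asboolb. Qed.

Lemma cell_list_nth c e j x : ~ big_cell c e -> List.nth_error (cell_list c e) j = Some x -> cell c e x.
Proof.
move=> hG hx; have := List.nth_error_In _ _ hx.
by case: (cell_list_spec hG) => _ _ /(_ x) [_].
Qed.

Lemma cell_valid c e x : cell c e x -> e :\: B = c :\: B /\ e :&: B \subset c.
Proof. by move=> [<- <-]; apply: leB_col hUV. Qed.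

Lemma trim_col_valid d : trim_col d :\: B = col V d :\: B /\ trim_col d :&: B \subset col V d.
Proof.
have restB : col V d :\: B :\: B = col V d :\: B /\ (col V d :\: B) :&: B \subset col V d.
  split; first by rewrite setDDl setUid.
  by apply/subsetP => a; rewrite in_setI in_setD => /andP [/andP [/negbTE ->]].
rewrite /trim_col; case: asboolP => hb; last exact: leB_col (inl d) hUV.
case: (unslot d) => [[e j]|//]; case: ifP => // /orP hcond.
case: (pselect (big_cell (col V d) e)) => hG.
  have [x hx] := atleast_exists (leq_ltn_trans (leq0n j) (ltn_ord j)) hG.
  exact: cell_valid hx.
have hj : j < size (cell_list (col V d) e) by case: hcond => // /asboolP.
have [x hx] := nth_error_exists hj.
exact: cell_valid (cell_list_nth hG hx).
Qed.

Lemma Wtrim_leB : leB B Wtrim V.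
Proof.
move=> a; split=> ha d; case: (trim_col_valid d) => /setP /(_ a) hNB /subsetP hsub.
- by move=> hw; apply/colP/hsub; rewrite in_setI ha andbT.
- by move: hNB; rewrite !in_setD ha /= /Wtrim => ->; split=> /colP.
Qed.

Lemma notS_col x : ~ List.In x S -> col U x = col V (orig x) :\: B.
Proof.
move=> hx; apply/setP => a; rewrite in_setD; case ha: (a \in B) => /=.
- by apply/colP => /(hS ha).
- by apply/colP/colP => /(proj2 (hUV a) (negbT ha) x).
Qed.

Lemma big_cell_restB c : big_class c -> big_cell c (c :\: B).
Proof.
move=> hb; rewrite /big_cell; case: (posnP q) => [q0|hq]; first by rewrite [X in atleast X]q0.
have [d hd] := atleast_exists (leq_trans hq (leq_q_nslots A q)) hb.
have hbd : big d by rewrite /big hd.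
pose f i : infl := inr (exist (fun p : D * nat => big p.1) (d, i) hbd).
have : atleast (q + size S) (fun x => exists i, x = f i).
  rewrite -(size_iota 0 (q + size S)).
  by apply: (atleast_seq (f := f)) (iota_uniq _ _) _ _ => [i j [->]|i _]; last exists i.
move/atleast_diff_list; apply: sub_atleast => x [[i ->] hn]; split=> //.
by rewrite (notS_col hn) /= hd.
Qed.

Lemma slots_unmatched c e : big_class c -> big_cell c e ->
  atleast q (fun y => col Wtrim y = e /\ ~ exists x, matched y x).
Proof.
move=> hb hG; case: (posnP q) => [q0|hq]; first by rewrite [X in atleast X]q0.
have [d0 hd0] := atleast_exists (leq_trans hq (leq_q_nslots A q)) hb.
have hb0 : big d0 by rewrite /big hd0.
rewrite -[X in atleast X](size_enum_ord q).
apply: (atleast_seq (f := fun j => slot d0 (e, j))) (enum_uniq _) _ _ => [j j'|j _].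
  by move/(slot_inj hb0) => -[].
have hcol := slot_col (e, j) hb0; have hu := unslot_slot (e, j) hb0.
have hbj : big (slot d0 (e, j)) := big_col (esym hcol) hb0.
split; first by rewrite col_Wtrim /trim_col (asboolT hbj) hu hcol hd0 (asboolT hG).
move=> [z [[]|[_ [e' [j' [hu' hn _]]]]]] //.
by move: hu' hn; rewrite hu hcol hd0 => -[<- _].
Qed.

Lemma cell_unmatched c e : big_class c -> big_cell c e ->
  atleast q (fun x => col U x = e /\ ~ exists y, matched y x).
Proof.
move=> hb hG; apply: sub_atleast (hG) => x [hc he]; split=> // -[z [[hn ex]|[_ [e' [j [_ hn ex]]]]]].
- by apply: hn; rewrite ex /= in hc; rewrite /big hc.
- by case: (cell_list_nth hn ex) => hc' he'; apply: hn; rewrite -hc' hc -he' he.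
Qed.

Lemma trim_col_unmatched d : big d -> ~ (exists x, matched d x) ->
  exists2 e, big_cell (col V d) e & trim_col d = e.
Proof.
move=> hb hn; have rest : big_cell (col V d) (col V d :\: B) := big_cell_restB hb.
rewrite /trim_col (asboolT hb); case hu: (unslot d) => [[e j]|]; last by exists (col V d :\: B).
case: (pselect (big_cell (col V d) e)) => hG; first by exists e; rewrite // (asboolT hG).
rewrite (asboolF hG) /=; case: ifP => hj; last by exists (col V d :\: B).
have [x hx] := nth_error_exists hj.
by case: hn; exists x; right; split=> //; exists e, j.
Qed.

Lemma orig_unmatched x : ~ (exists d, matched d x) ->
  big_class (col V (orig x)) /\ big_cell (col V (orig x)) (col U x).
Proof.
move=> hn; have hb : big (orig x).
  by case: (orig_big x) => [[d [ex hb]]|//]; case: hn; exists d; left.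
split=> //; apply: contrapT => hG; case: (cell_list_spec hG) => _ hlen /(_ x) [hLc _].
have [j ej] := List.In_nth_error _ _ (hLc (conj erefl erefl)).
have hj : j < q := ltn_trans (nth_error_lt ej) hlen.
have hcol := slot_col (col U x, Ordinal hj) hb.
apply: hn; exists (slot (orig x) (col U x, Ordinal hj)); right; split.
  exact: big_col (esym hcol) hb.
by exists (col U x), (Ordinal hj); rewrite unslot_slot // hcol.
Qed.

Lemma matched_functional d x x' : matched d x -> matched d x' -> x = x'.
Proof.
move=> [[hb ->]|[hb [e [j [hu _ ex]]]]] [[hb' ->]|[hb' [e' [j' [hu' _ ex']]]]] //.
by move: ex'; rewrite hu in hu'; case: hu' => <- <-; rewrite ex => -[].
Qed.

Lemma matched_injective d d' x : matched d x -> matched d' x -> d = d'.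
Proof.
move=> [[hb ex]|[hb [e [j [hu hn ex]]]]] [[hb' ex']|[hb' [e' [j' [hu' hn' ex']]]]].
- by move: ex'; rewrite ex => -[].
- by case: (cell_list_nth hn' ex') => hc _; case: hb; rewrite ex /= in hc; apply: big_col (esym hc) hb'.
- by case: (cell_list_nth hn ex) => hc _; case: hb'; rewrite ex' /= in hc; apply: big_col (esym hc) hb.
case: (cell_list_nth hn ex) (cell_list_nth hn' ex') => hc he [hc' he'].
have ec : col V d = col V d' by rewrite -hc hc'.
rewrite -ec -he' he in ex'; case: (cell_list_spec hn) => hnd _ _.
have ej : j = j' by apply/val_inj/(nth_error_NoDup hnd ex ex').
rewrite -(slot_unslot hu) -(slot_unslot hu') -he' he -ej.
exact: slot_colE.
Qed.

Lemma col_matched d x : matched d x -> col Wtrim d = col U x.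
Proof.
rewrite col_Wtrim /trim_col => -[[hb ->]|[hb [e [j [hu hn ex]]]]]; first by rewrite (asboolF hb).
by rewrite (asboolT hb) hu (nth_error_lt ex) orbT; case: (cell_list_nth hn ex).
Qed.

Lemma ef_rel_trim : ef_rel Wtrim U matched q.
Proof.
split.
- exact: matched_functional.
- exact: matched_injective.
- exact: col_matched.
- move=> d hn; have hb : big d by apply: contrapT => hb; apply: hn; exists (inl d); left.
  case: (trim_col_unmatched hb hn) => e hG he.
  by rewrite col_Wtrim he; split; [apply: slots_unmatched hb hG | apply: cell_unmatched hb hG].
- move=> x /[dup] hn /orig_unmatched [hb hG].
  by split; [apply: slots_unmatched hb hG | apply: cell_unmatched hb hG].
Qed.

Definition trim_support : seq D :=
  List.flat_map (fun c => small_class_list c ++ class_list c) (enum {: {set A}}).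

Lemma Wtrim_support b d : b \in B -> Wtrim b d -> List.In d trim_support.
Proof.
move=> hbB hw; apply/List.in_flat_map; exists (col V d); split; first by apply/In_mem; rewrite mem_enum.
apply/List.in_or_app; move: hw; rewrite /Wtrim /trim_col; case: asboolP => hb.
- case hu: (unslot d) => [s|]; last by rewrite in_setD hbB.
  by right; rewrite -{1}(slot_unslot hu); apply: slot_in.
- by move=> _; left; case: (small_class_list_spec (col V d)) => _; apply.
Qed.

Lemma size_trim_support : size trim_support <= #|{: {set A}}| * (nslots + nslots).
Proof.
rewrite /trim_support cardE; elim: (enum _) => [|c cs IH] //=.
rewrite size_cat mulSn; apply: leq_add => //; rewrite size_cat.
by apply: leq_add; [case: (small_class_list_spec c) | case: (class_list_spec c)].
Qed.

End Trimming.

(** * The FOE normal form *)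

Fixpoint maxvar (A : Type) (f : form A) : nat :=
  match f with
  | FAt _ x | FNAt _ x => x
  | FEq x y | FNEq x y => maxn x y
  | FAnd f1 f2 | FOr f1 f2 => maxn (maxvar f1) (maxvar f2)
  | FEx x f1 | FAll x f1 => maxn x (maxvar f1)
  | _ => 0
  end.

Section Witnesses.
Variables (A : finType) (B : {set A}).
Implicit Type ws : seq (var * {set A}).

(* [b(y)], [b \in B], becomes "[y] is one of the witnesses [p.1] whose colour [p.2] contains [b]";
   the conjunct [y = y] in the negative case keeps the requirement that [y] be assigned. *)
Fixpoint subst ws (f : form A) : form A :=
  match f with
  | FAt a y =>
      if a \in B then bigOr [seq p : var * {set A} <- ws | a \in p.2] (fun p => FEq A y p.1) else FAt a y
  | FNAt a y =>
      if a \in B then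
        FAnd (FEq A y y) (bigAnd [seq p : var * {set A} <- ws | a \in p.2] (fun p => FNEq A y p.1))
      else FNAt a y
  | FAnd f1 f2 => FAnd (subst ws f1) (subst ws f2)
  | FOr f1 f2 => FOr (subst ws f1) (subst ws f2)
  | FEx x f1 => FEx x (subst ws f1)
  | FAll x f1 => FAll x (subst ws f1)
  | f => f
  end.

Definition Vwit D ws (h : assign D) (V : A -> D -> Prop) (a : A) (d : D) :=
  if a \in B then exists2 p, List.In p ws & a \in p.2 /\ h p.1 = Some d else V a d.

Lemma sat_subst D (V : A -> D -> Prop) ws (h : assign D) f g :
  (forall p, List.In p ws -> maxvar f < p.1) -> (forall p, List.In p ws -> h p.1 <> None) ->
  (forall p, List.In p ws -> g p.1 = h p.1) ->
  (sat V g (subst ws f) <-> sat (Vwit ws h V) g f).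
Proof.
move=> + Hh.
have fresh x (f' : form A) g' d : (forall p, List.In p ws -> maxn x (maxvar f') < p.1) ->
    (forall p, List.In p ws -> g' p.1 = h p.1) ->
    (forall p, List.In p ws -> maxvar f' < p.1) /\ (forall p, List.In p ws -> upd g' x d p.1 = h p.1).
  move=> Hm Hg; split=> p /[dup] hp /Hm; rewrite gtn_max => /andP [hx hf] //.
  by rewrite /upd gtn_eqF // Hg.
elim: f g => //= [a y|a y|f1 IH1 f2 IH2|f1 IH1 f2 IH2|x f IH|x f IH] g Hm Hg.
- rewrite /Vwit; case: ifP => ha //; rewrite sat_bigOr; split.
  + move=> [p /In_filter [hp hap] /= [d [e1 e2]]].
    by exists d; split=> //; exists p; rewrite // -Hg.
  + move=> [d [e1 [p hp [hap e2]]]]; exists p; first exact/In_filter.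
    by exists d; rewrite Hg.
- rewrite /Vwit; case: ifP => ha //=; rewrite sat_bigAnd; split.
  + move=> [[d [e1 _]] H]; exists d; split=> // -[p hp [hap e2]].
    have /= [d' [e' [e3 [e4 ne]]]] := H p ((In_filter _ _ _).2 (conj hp hap)).
    by move: e3 e4; rewrite e1 Hg // e2 => -[->] [/ne].
  + move=> [d [e1 hn]]; split; first by exists d.
    move=> p /In_filter [hp hap] /=; case eh: (h p.1) (Hh p hp) => [e|] // _.
    exists d, e; do 2!split=> //; first by rewrite Hg.
    by move=> de; subst; apply: hn; exists p.
- by rewrite IH1 ?IH2 // => p /Hm; rewrite gtn_max => /andP [].
- by rewrite IH1 ?IH2 // => p /Hm; rewrite gtn_max => /andP [].
- by split=> -[d hd]; exists d; move: hd; case: (fresh x f g d Hm Hg) => Hm' Hg'; rewrite IH.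
- by split=> hd d; move: (hd d); case: (fresh x f g d Hm Hg) => Hm' Hg'; rewrite IH.
Qed.

Lemma free_subst ws f y :
  free_in y (subst ws f) -> free_in y f \/ exists2 p, List.In p ws & y = p.1.
Proof.
elim: f => //= [a x|a x|x1 x2|x1 x2|f1 IH1 f2 IH2|f1 IH1 f2 IH2|x f IH|x f IH];
  try by [left | case=> [/IH1|/IH2]; tauto | case=> ne /IH []; [left | right]].
- case: (a \in B) => [/free_bigOr [p /In_filter [hp _] /= [->|->]]|];
    [left | right; exists p | left] => //.
- case: (a \in B) => [[[->|->]|/free_bigAnd [p /In_filter [hp _] /= [->|->]]]|]; try by left.
  by right; exists p.
Qed.

Lemma avoids_subst ws f : avoids B (subst ws f).
Proof.
elim: f => //= [a x|a x]; case: ifP => ha /=; rewrite ?ha //.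
- by apply: avoids_bigOr.
- by split=> //; apply: avoids_bigAnd.
Qed.

Definition ex_witnesses ws (th : form A) : form A :=
  foldr (fun p acc => FEx p.1 (FAnd (atomsB B p.2 p.1) acc)) th ws.

Lemma syn_cont_ex_witnesses ws th : avoids B th -> syn_cont FOE B (ex_witnesses ws th).
Proof.
move=> ha; elim: ws => [|p ws IH] /=; first exact: SC_base.
by apply/SC_ex/SC_and => //; apply: syn_cont_atomsB.
Qed.

Lemma free_ex_witnesses ws th y :
  free_in y (ex_witnesses ws th) -> free_in y th /\ forall p, List.In p ws -> y <> p.1.
Proof.
elim: ws => [|p ws IH] //= [ne [/free_atomsB //|/IH [h1 h2]]].
by split=> // p' [<-|/h2].
Qed.

Lemma sat_ex_witnesses D (V : A -> D -> Prop) ws th g : uniq (unzip1 ws) ->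
  sat V g (ex_witnesses ws th) <->
  exists h, [/\ forall p, List.In p ws -> exists2 d, h p.1 = Some d & p.2 :&: B \subset col V d,
                forall y, y \notin unzip1 ws -> h y = g y & sat V h th].
Proof.
elim: ws g => [|p ws IH] g /=.
  move=> _; split=> [hg|[h [_ hh hth]]]; first by exists g.
  by apply: (sat_agree V _).1 hth => y _; rewrite hh.
case/andP => hp /IH {}IH; split=> [[d [/(sat_atomsB _ _ _ (upd_same g p.1 d)) hpos /IH]]|].
- move=> [h [h1 h2 h3]]; exists h; split=> // [p' [<-|/h1] //|y].
    by exists d; rewrite // h2 // upd_same.
  by rewrite in_cons negb_or => /andP [ne hy]; rewrite h2 // /upd (negbTE ne).
- move=> [h [h1 h2 h3]]; case: (h1 p (or_introl erefl)) => d hd hsub.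
  exists d; split; first exact/(sat_atomsB _ _ _ (upd_same g p.1 d)).
  apply/IH; exists h; split=> // [p' hp'|y hy]; first by apply: h1; right.
  rewrite /upd; case: eqP => [->|ne] //; apply: h2.
  by rewrite in_cons negb_or hy andbT; apply/eqP.
Qed.

End Witnesses.

Fixpoint lookup (D : Type) (wl : seq (var * D)) (y : var) : option D :=
  if wl is p :: wl' then (if p.1 == y then Some p.2 else lookup wl' y) else None.

Lemma lookup_notin D (wl : seq (var * D)) y : y \notin unzip1 wl -> lookup wl y = None.
Proof. by elim: wl => [|p wl IH] //=; rewrite in_cons negb_or eq_sym => /andP [/negbTE -> /IH]. Qed.

Lemma lookup_in D (wl : seq (var * D)) p :
  uniq (unzip1 wl) -> List.In p wl -> lookup wl p.1 = Some p.2.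
Proof.
elim: wl => [|p' wl IH] //= /andP [hp' hu] [<-|hp]; first by rewrite eqxx.
case: eqP => [e|_]; last exact: IH.
by move: hp'; rewrite e; move/In_mem: (List.in_map fst _ _ hp) => ->.
Qed.

Lemma In_zip_iota D (L : seq D) m d : List.In d L -> exists y, List.In (y, d) (zip (iota m (size L)) L).
Proof.
elim: L m => [|d' L IH] m //= [<-|/(IH m.+1) [y hy]]; first by exists m; left.
by exists y; right.
Qed.

Fixpoint seqs_upto (T : finType) (n : nat) : seq (seq T) :=
  if n is n'.+1 then [::] :: [seq c :: s | c <- enum T, s <- seqs_upto T n'] else [:: [::]].

Lemma seqs_uptoP (T : finType) n (s : seq T) : size s <= n -> s \in seqs_upto T n.
Proof.
elim: n s => [|n IH] [|c s] //= hs; rewrite in_cons /=.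
by apply/allpairsP; exists (c, s); rewrite mem_enum IH.
Qed.

Section FOENormalForm.
Variables (A : finType) (B : {set A}).

Definition witness_bound (q : nat) := #|{: {set A}}| * (nslots A q + nslots A q).

Lemma continuous_small_witness (phi : form A) : continuous_in B phi ->
  forall D (V : A -> D -> Prop), holds V phi -> exists (W : A -> D -> Prop) (L : seq D),
    [/\ leB B W V, holds W phi, (forall b d, b \in B -> W b d -> List.In d L)
      & size L <= witness_bound (rank phi)].
Proof.
move=> [_ hcont] D V hV; set q := rank phi.
have /hcont [U [[hUV /leB_fin_support [S hS]] hU]] := holds_infl (leqnn q) hV.
exists (Wtrim B U), (trim_support q V); split.
- exact: Wtrim_leB hUV.
- exact: (holds_ef_rel (leqnn q) (ef_rel_trim hUV hS)).2 hU.
- exact: Wtrim_support.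
- exact: size_trim_support.
Qed.

Definition witnesses (m : nat) (bs : seq {set A}) := zip (iota m (size bs)) bs.

Definition chiFOE (phi : form A) (bs : seq {set A}) : form A :=
  let ws := witnesses (maxvar phi).+1 bs in ex_witnesses B ws (subst B ws phi).

Lemma witnesses_vars m bs : unzip1 (witnesses m bs) = iota m (size bs).
Proof. by rewrite unzip1_zip // size_iota. Qed.

Lemma witnesses_fresh m bs p : List.In p (witnesses m bs) -> m <= p.1.
Proof.
move=> /In_mem /(map_f fst); rewrite -/(unzip1 _) witnesses_vars mem_iota => /andP [] //.
Qed.

Lemma witnesses_map D m (f : D -> {set A}) (L : seq D) :
  witnesses m (map f L) = [seq (p.1, f p.2) | p <- zip (iota m (size L)) L].
Proof. by rewrite /witnesses size_map; elim: L m => //= d L IH m; rewrite IH. Qed.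

Lemma sentence_chiFOE phi bs : sentence phi -> sentence (chiFOE phi bs).
Proof.
move=> hs y /free_ex_witnesses [/free_subst [/hs //|[p hp ->]]] /(_ p hp); exact.
Qed.

Lemma syn_cont_chiFOE phi bs : syn_cont FOE B (chiFOE phi bs).
Proof. exact/syn_cont_ex_witnesses/avoids_subst. Qed.

Lemma chiFOE_sound phi bs D (V : A -> D -> Prop) :
  sentence phi -> monotone_in B phi -> holds V (chiFOE phi bs) -> holds V phi.
Proof.
move=> hs hmono; rewrite /holds /chiFOE sat_ex_witnesses ?witnesses_vars ?iota_uniq //.
move=> [h [h1 _ h3]]; apply/(sentence_sat V h hs).
apply: (hmono _ (Vwit B (witnesses (maxvar phi).+1 bs) h V)).
  by apply: (sat_subst B V _ _ _).1 h3 => [p /witnesses_fresh|p /h1 [d -> _]|].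
move=> a; split=> ha d; rewrite /Vwit ?ha ?(negbTE ha) // => -[p hp [hap e]].
by case: (h1 p hp) => d'; rewrite e => -[<-] /subsetP /(_ a); rewrite inE hap ha => /(_ isT) /colP.
Qed.

Lemma chiFOE_complete phi D (V W : A -> D -> Prop) (L : seq D) :
  sentence phi -> leB B W V -> holds W phi -> (forall b d, b \in B -> W b d -> List.In d L) ->
  holds V (chiFOE phi [seq col W d :&: B | d <- L]).
Proof.
move=> hs hWV hW hsup; set m := (maxvar phi).+1.
pose wl := zip (iota m (size L)) L.
have ws_wl : witnesses m [seq col W d :&: B | d <- L] = [seq (p.1, col W p.2 :&: B) | p <- wl].
  exact: witnesses_map.
have wl_uniq : uniq (unzip1 wl) by rewrite unzip1_zip ?size_iota ?iota_uniq.
have h_wl p : List.In p wl -> lookup wl p.1 = Some p.2 by apply: lookup_in.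
rewrite /holds /chiFOE -/m sat_ex_witnesses; last by rewrite witnesses_vars iota_uniq.
exists (lookup wl); rewrite ws_wl; split.
- move=> p /List.in_map_iff [[y d] [<- hp]] /=; exists d; first exact: h_wl hp.
  apply/subsetP => a /setIP [/setIP [ha hb] _].
  by case: (leB_col d hWV) => _ /subsetP; apply; rewrite inE ha.
- have -> : unzip1 [seq (p.1, col W p.2 :&: B) | p <- wl] = unzip1 wl by rewrite /unzip1 -map_comp.
  by move=> y; apply: lookup_notin.
set ws := [seq (p.1, col W p.2 :&: B) | p <- wl].
have Hm p : List.In p ws -> maxvar phi < p.1 by rewrite /ws -ws_wl => /witnesses_fresh.
have Hh p : List.In p ws -> lookup wl p.1 <> None.
  by move=> /List.in_map_iff [[y d] [<- hp]]; rewrite /= (h_wl _ hp).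
apply: (sat_subst B V Hm Hh (fun _ _ => erefl)).2; apply/(sentence_sat _ _ hs).
apply: (sat_ext _ _ _).1 hW => a d; rewrite /Vwit; case: ifP => ha.
  2: exact: (proj2 (hWV a) (negbT ha) d).
split=> [hw|[p /List.in_map_iff [[y d'] [<- hp]] [/= hap e]]].
- have [y hy] := In_zip_iota m (hsup a d ha hw); exists (y, col W d :&: B).
    by apply/List.in_map_iff; exists (y, d).
  by rewrite inE ha andbT (h_wl _ hy); split=> //; apply/colP.
- by move: e; rewrite (h_wl _ hp) => -[<-]; move: hap; rewrite inE => /andP [/colP].
Qed.

Lemma FOE_normal_form (phi : form A) : sentence phi -> continuous_in B phi ->
  exists psi, [/\ sentence psi, syn_cont FOE B psi & equiv_sent phi psi].
Proof.
move=> hs hc; exists (bigOr (seqs_upto _ (witness_bound (rank phi))) (chiFOE phi)); split.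
- by move=> y /free_bigOr [bs _]; apply: sentence_chiFOE.
- by apply: syn_cont_bigOr => bs _; apply: syn_cont_chiFOE.
move=> D V; split=> [hV|/sat_bigOr [bs _]]; last exact: chiFOE_sound hs hc.1.
have [W [L [hWV hW hsup hsize]]] := continuous_small_witness hc hV.
apply/sat_bigOr; exists [seq col W d :&: B | d <- L]; last exact: chiFOE_complete.
by apply/In_mem/seqs_uptoP; rewrite size_map.
Qed.

End FOENormalForm.

Lemma continuous_equiv (A : finType) (B : {set A}) (phi psi : form A) :
  sentence phi -> sentence psi -> equiv_sent phi psi -> continuous_in B psi -> continuous_in B phi.
Proof.
move=> hs hps heq [hmono hcont].
have E D (V : A -> D -> Prop) g : sat V g phi <-> sat V g psi.
  by rewrite (sentence_sat V g hs) (sentence_sat V g hps); apply: heq.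
split=> [D V V' g /E h /(hmono _ _ _ _ h) /E //|D V g /E /hcont [U [hU /E hu]]].
by exists U.
Qed.

Unset Implicit Arguments.

Theorem proposition5p3 (L : logic) (A : finType) (B : {set A}) (phi : form A) :
  in_logic L phi -> sentence phi ->
  (continuous_in B phi <->
   exists psi : form A,
     in_logic L psi /\ sentence psi /\ syn_cont L B psi /\ equiv_sent phi psi).
Proof.
move=> hl hs; split=> [hc|[psi [_ [hps [hsc heq]]]]].
- case: L hl => hl.
  + by have [psi [? ? ? ?]] := FO_normal_form hl hc; exists psi.
  + by have [psi [? ? ?]] := FOE_normal_form hs hc; exists psi.
- exact: continuous_equiv hs hps heq (syn_cont_continuous hsc).
Qed.
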